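(* Let $\mathcal{D}$ be a distribution over pairs $(x,y)$ with $x \in \mathbb{R}^n$ and $y \in [C]$, let $d(\cdot,\cdot)$ be an arbitrary metric on $\mathbb{R}^n$, and let $\epsilon > 0$. Let $f_{\mathrm{det}}: \mathbb{R}^n \to [C] \cup \{\bot\}$ be a detector with risk $R(f_{\mathrm{det}}) = \alpha$ and robust risk with detection $R^{\epsilon}_{\mathrm{adv\text{-}det}}(f_{\mathrm{det}}) = \beta$. Define a classifier $f_{\mathrm{clf}}$ on an input $\hat{x} \in \mathbb{R}^n$ as follows: if $f_{\mathrm{det}}(\hat{x}) \neq \bot$, output $f_{\mathrm{det}}(\hat{x})$; otherwise, if there exists $x'$ with $d(\hat{x}, x') \le \epsilon/2$ and $f_{\mathrm{det}}(x') \neq \bot$, output $f_{\mathrm{det}}(x')$ for such an $x'$; otherwise output a uniformly random label in $[C]$. Then $R(f_{\mathrm{clf}}) \le \alpha$ and $R^{\epsilon/2}_{\mathrm{adv}}(f_{\mathrm{clf}}) \le \beta$.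
   Context: A classifier is a function $f_{\mathrm{clf}}: \mathbb{R}^n \to [C]$; a detector is a function $f_{\mathrm{det}}: \mathbb{R}^n \to [C] \cup \{\bot\}$, where $\bot$ denotes rejection. For $f$ either a classifier or a detector, the risk is $R(f) = \mathbb{E}_{(x,y)\sim\mathcal{D}}[\mathbb{1}\{f(x) \neq y\}]$ (for a detector, outputting $\bot$ on a clean sample counts as an error). The robust risk of a classifier at distance $\epsilon$ is $R^{\epsilon}_{\mathrm{adv}}(f_{\mathrm{clf}}) = \mathbb{E}_{(x,y)\sim\mathcal{D}}[\max_{d(x,\hat{x}) \le \epsilon} \mathbb{1}\{f_{\mathrm{clf}}(\hat{x}) \neq y\}]$. The robust risk with detection of a detector at distance $\epsilon$ is $R^{\epsilon}_{\mathrm{adv\text{-}det}}(f_{\mathrm{det}}) = \mathbb{E}_{(x,y)\sim\mathcal{D}}[\max_{d(x,\hat{x}) \le \epsilon} \mathbb{1}\{f_{\mathrm{det}}(x) \neq y \ \lor\ f_{\mathrm{det}}(\hat{x}) \notin \{y, \bot\}\}]$. Detectors are assumed deterministic. The random label output by $f_{\mathrm{clf}}$ in the last case may be counted as an error in the risk bounds. *)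

From HB Require Import structures.
From mathcomp Require Import all_boot all_order all_algebra.
From mathcomp Require Import all_classical all_reals all_analysis.
Set Implicit Arguments. Unset Strict Implicit. Unset Printing Implicit Defensive.
Import Order.TTheory GRing.Theory Num.Theory.
Local Open Scope classical_set_scope.
Local Open Scope ring_scope.

Definition is_metric (R : realType) (V : Type) (dist : V -> V -> R) : Prop :=
  (forall x y, 0 <= dist x y) /\
  (forall x y, dist x y = 0 <-> x = y) /\
  (forall x y, dist x y = dist y x) /\
  (forall x y z, dist x z <= dist x y + dist y z).

(* The data distribution D over R^n x [C] is represented as the joint law of a
   pair of random variables (X, Y) : Omega -> 'rV[R]_n * 'I_C on a probability
   space (Omega, P).  For a detector None is the rejection symbol ⊥. *)

(* R(f) = E[ 1{ f(x) <> y } ]  (None never equals a label, so for a detector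
   rejecting a clean sample counts as an error). *)
Definition risk (R : realType) (d : measure_display) (Omega : measurableType d)
    (P : probability Omega R) (n C : nat)
    (X : Omega -> 'rV[R]_n) (Y : Omega -> 'I_C)
    (f : 'rV[R]_n -> option 'I_C) : \bar R :=
  (\int[P]_w (\1_[set w | f (X w) <> Some (Y w)] w)%:E)%E.

Definition adv_risk (R : realType) (d : measure_display) (Omega : measurableType d)
    (P : probability Omega R) (n C : nat)
    (X : Omega -> 'rV[R]_n) (Y : Omega -> 'I_C)
    (dist : 'rV[R]_n -> 'rV[R]_n -> R) (eps : R)
    (f : 'rV[R]_n -> option 'I_C) : \bar R :=
  (\int[P]_w (\1_[set w | exists xh, dist (X w) xh <= eps /\
                                     f xh <> Some (Y w)] w)%:E)%E.

Definition adv_det_risk (R : realType) (d : measure_display) (Omega : measurableType d)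
    (P : probability Omega R) (n C : nat)
    (X : Omega -> 'rV[R]_n) (Y : Omega -> 'I_C)
    (dist : 'rV[R]_n -> 'rV[R]_n -> R) (eps : R)
    (f : 'rV[R]_n -> option 'I_C) : \bar R :=
  (\int[P]_w (\1_[set w | exists xh, dist (X w) xh <= eps /\
        (f (X w) <> Some (Y w) \/
         (f xh <> Some (Y w) /\ f xh <> None))] w)%:E)%E.

(* f_clf is the classifier built from the detector f_det as in the statement:
   - if f_det xh <> ⊥, output f_det xh;
   - else if some x' with dist xh x' <= eps/2 has f_det x' <> ⊥, output f_det x'
     for such an x' (any choice);
   - else output a uniformly random label; following the convention of the
     paper this random label is counted as an error, which we model by the
     output None (never equal to the true label). *)
Definition clf_of_det (R : realType) (n C : nat)
    (dist : 'rV[R]_n -> 'rV[R]_n -> R) (eps : R)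
    (f_det f_clf : 'rV[R]_n -> option 'I_C) : Prop :=
  forall xh : 'rV[R]_n,
    (f_det xh <> None -> f_clf xh = f_det xh) /\
    (f_det xh = None ->
       (exists x', dist xh x' <= eps / 2 /\ f_det x' <> None) ->
       exists x', [/\ dist xh x' <= eps / 2, f_det x' <> None &
                      f_clf xh = f_det x']) /\
    (f_det xh = None ->
       ~ (exists x', dist xh x' <= eps / 2 /\ f_det x' <> None) ->
       f_clf xh = None).

From HB Require Import structures.
From mathcomp Require Import all_boot all_order all_algebra.
From mathcomp Require Import all_classical all_reals all_analysis.
Import Order.TTheory GRing.Theory Num.Theory.
Local Open Scope classical_set_scope.
Local Open Scope ring_scope.

(* Both bounds hold pointwise: whenever f_clf errs on a sample, f_det errs on
   it in the detection sense, and integrals of indicators are monotone.  For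
   the robust bound, an attack xh within eps/2 of x on which f_clf errs either
   lands on a point accepted by f_det, where f_clf = f_det, or on a rejected
   one; the accepted neighbour x' within eps/2 of xh that f_clf copies is then,
   by the triangle inequality, an attack within eps on which f_det outputs a
   wrong label. *)

(* No measurability is needed: the integral of a nonnegative function is a
   supremum over the simple functions below it. *)
Lemma ge0_le_integralT (R : realType) (d : measure_display)
    (T : measurableType d) (mu : {measure set T -> \bar R})
    (f g : T -> \bar R) :
  (forall x, (0 <= f x)%E) -> (forall x, (f x <= g x)%E) ->
  (\int[mu]_x f x <= \int[mu]_x g x)%E.
Proof.
move=> f0 fg; have g0 x := le_trans (f0 x) (fg x).
rewrite !ge0_integralTE //; apply: ereal_sup_le => _ [h /= hf <-].
by exists h => //= x; exact: le_trans (hf x) (fg x).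
Qed.

Lemma le_integral_indic (R : realType) (d : measure_display)
    (T : measurableType d) (mu : {measure set T -> \bar R}) (A B : set T) :
  A `<=` B -> (\int[mu]_x (\1_A x)%:E <= \int[mu]_x (\1_B x)%:E)%E.
Proof.
move=> AB; apply: ge0_le_integralT => x; rewrite lee_fin !indicE //.
have [/set_mem/AB/mem_set -> //|_] := boolP (x \in A).
by rewrite ler0n.
Qed.

Section classifier_of_detector.
Variables (R : realType) (n C : nat) (dist : 'rV[R]_n -> 'rV[R]_n -> R).
Variables (eps : R) (f_det f_clf : 'rV[R]_n -> option 'I_C).
Hypothesis f_clfP : clf_of_det dist eps f_det f_clf.

Lemma clf_of_det_accepted x : f_det x <> None -> f_clf x = f_det x.
Proof. exact: (f_clfP x).1. Qed.

Lemma clf_of_det_err x y : f_clf x <> Some y -> f_det x <> Some y.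
Proof.
by move=> clf_err det_ok; apply: clf_err; rewrite clf_of_det_accepted det_ok.
Qed.

Hypothesis dist_metric : is_metric dist.

Lemma clf_of_det_adv_err x y xh :
  dist x xh <= eps / 2 -> f_clf xh <> Some y ->
  exists xa, dist x xa <= eps /\
    (f_det x <> Some y \/ (f_det xa <> Some y /\ f_det xa <> None)).
Proof.
move: dist_metric => [dist_ge0 [dist_eq0 [distC dist_tri]]] x_xh clf_err.
have eps2_ge0 : 0 <= eps / 2 := le_trans (dist_ge0 x xh) x_xh.
have eps2_le : eps / 2 <= eps by rewrite [leRHS]splitr lerDl.
have [det_ok|det_err] := f_det x =P Some y; last first.
  by exists x; split; [rewrite (dist_eq0 x x).2 // (le_trans eps2_ge0)|left].
have [xh_rej|xh_acc] := f_det xh =P None; last first.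
  exists xh; split; first exact: le_trans x_xh eps2_le.
  by right; split => //; rewrite -clf_of_det_accepted.
have [|x' [xh_x' x'_acc clf_x']] := (f_clfP xh).2.1 xh_rej.
  by exists x; rewrite distC det_ok.
exists x'; split; last by right; split => //; rewrite -clf_x'.
by rewrite (le_trans (dist_tri _ xh _)) // [eps]splitr lerD.
Qed.

End classifier_of_detector.

Theorem theorem1 (R : realType) (d : measure_display) (Omega : measurableType d)
    (P : probability Omega R) (n C : nat)
    (X : Omega -> 'rV[R]_n) (Y : Omega -> 'I_C)
    (dist : 'rV[R]_n -> 'rV[R]_n -> R) (eps : R)
    (f_det f_clf : 'rV[R]_n -> option 'I_C) (alpha beta : \bar R) :
  is_metric dist -> 0 < eps ->
  risk P X Y f_det = alpha ->
  adv_det_risk P X Y dist eps f_det = beta ->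
  clf_of_det dist eps f_det f_clf ->
  (risk P X Y f_clf <= alpha)%E /\
  (adv_risk P X Y dist (eps / 2) f_clf <= beta)%E.
Proof.
move=> dist_metric _ <- <- f_clfP; split; apply: le_integral_indic => w /=.
  exact: clf_of_det_err.
by move=> [xh [x_xh clf_err]]; exact: clf_of_det_adv_err clf_err.
Qed.
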